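(* Let $\Sigma$ be a germ at $0$ of a closed subset of $\mathbb{R}^n$ with $0\in\Sigma$, let $r\ge1$, $n\ge p$, and $f\in\mathcal{E}_{[r+1]}(n,p)$. The following are equivalent: (1) $f$ satisfies condition $(\widetilde K^\delta_\Sigma)$: for every $g\in\mathcal{E}_{[r+1]}(n,p)$ with $j^rg(\Sigma;0)=j^rf(\Sigma;0)$ there is $\delta>0$ (depending on $g$) with $d(x,\Sigma)\kappa(df(x))+\|g(x)\|\succsim d(x,\Sigma)^{r+1-\delta}$ near $0$; (2) for every such $g$ there is $\delta>0$ with $d(x,\Sigma)\left(\dfrac{\Gamma(\operatorname{grad}g_1(x),\dots,\operatorname{grad}g_p(x))}{\sum_{j=1}^p\Gamma((\operatorname{grad}g_i(x))_{i\neq j})}\right)^{1/2}+\|g(x)\|\succsim d(x,\Sigma)^{r+1-\delta}$ near $0$; (3) for every such $g$ there is $\delta>0$ with $d(x,\Sigma)\|dg^*(x)y\|+\|g(x)\|\succsim d(x,\Sigma)^{r+1-\delta}$ for $x$ near $0$, uniformly in $y\in\mathbb{S}^{p-1}$; (4) for every such $g$ there is $\delta>0$ with $d(x,\Sigma)\|df^*(x)y\|+\|g(x)\|\succsim d(x,\Sigma)^{r+1-\delta}$ for $x$ near $0$, uniformly in $y\in\mathbb{S}^{p-1}$.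
   Context: $\mathcal{E}_{[s]}(n,p)$ is the set of germs at $0$ of $C^s$ maps $(\mathbb{R}^n,0)\to(\mathbb{R}^p,0)$. For $f,g\in\mathcal{E}_{[s]}(n,p)$, $j^rg(\Sigma;0)=j^rf(\Sigma;0)$ means there is a neighbourhood $U$ of $0$ such that the $r$-jets of $f$ and $g$ agree at every point of $\Sigma\cap U$. $d(x,\Sigma)$ is the distance to $\Sigma$. $\phi\precsim\psi$ means $\phi\le K\psi$ on some closed ball about $0$ for some $K>0$. The Kuo distance of $v_1,\dots,v_p\in\mathbb{R}^n$ is $\kappa(v_1,\dots,v_p)=\min_i\operatorname{dist}(v_i,\operatorname{span}\{v_j:j\ne i\})$ and $\kappa(df(x))=\kappa(\operatorname{grad}f_1(x),\dots,\operatorname{grad}f_p(x))$. $\Gamma$ denotes the Gram determinant $\Gamma(v_1,\dots,v_k)=\det(\langle v_i,v_j\rangle)$ (empty family: $1$). $df^*(x)y=\sum_iy_i\operatorname{grad}f_i(x)$; $\mathbb{S}^{p-1}$ is the unit sphere in $\mathbb{R}^p$. *)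

From Stdlib Require Import Reals ClassicalEpsilon.
From mathcomp Require Import ssreflect ssrbool ssrfun eqtype ssrnat seq fintype bigop.
From mathcomp Require Import fingroup perm.

Set Implicit Arguments.
Unset Strict Implicit.

Local Open Scope R_scope.

Definition vec (n : nat) := 'I_n -> R.
Definition vzero {n : nat} : vec n := fun _ => 0.
Definition vsum (n : nat) (F : 'I_n -> R) : R := \big[Rplus/0]_(i < n) F i.
Definition dot (n : nat) (x y : vec n) : R := vsum (fun i => x i * y i).
Definition vnorm (n : nat) (x : vec n) : R := sqrt (dot x x).
Definition vsub (n : nat) (x y : vec n) : vec n := fun i => x i - y i.

(** Infimum of a set of reals (chosen classically; meaningful when the set
    is nonempty and bounded below, which is the case for all uses below). *)
Definition is_glb (E : R -> Prop) (m : R) : Prop :=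
  (forall y, E y -> m <= y) /\ (forall b, (forall y, E y -> b <= y) -> b <= m).
Definition Rinf (E : R -> Prop) : R := epsilon (inhabits 0) (is_glb E).

Definition dist_set (n : nat) (S : vec n -> Prop) (x : vec n) : R :=
  Rinf (fun d => exists y, S y /\ d = vnorm (vsub x y)).

Definition closed_vset (n : nat) (S : vec n -> Prop) : Prop :=
  forall x, ~ S x -> exists eps, 0 < eps /\
    forall y, vnorm (vsub y x) < eps -> ~ S y.

Definition span_except (n p : nat) (v : 'I_p -> vec n) (i : 'I_p) : vec n -> Prop :=
  fun w => exists c : 'I_p -> R, c i = 0 /\
    forall k, w k = \big[Rplus/0]_(j < p) (c j * v j k).
Definition kuo (n p : nat) (v : 'I_p -> vec n) : R :=
  Rinf (fun d => exists i : 'I_p, d = dist_set (span_except v i) (v i)).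

(** Determinant (Leibniz formula) and Gram determinant; the empty family
    has Gram determinant 1. *)
Definition det (k : nat) (A : 'I_k -> 'I_k -> R) : R :=
  \big[Rplus/0]_(s : {perm 'I_k})
     ((if odd_perm s then -1 else 1) * \big[Rmult/1]_(i < k) A i (s i)).
Definition gram (n k : nat) (v : 'I_k -> vec n) : R :=
  det (fun i j => dot (v i) (v j)).

(** Partial derivatives (intrinsic: the unique limit when it exists). *)
Definition shift (n : nat) (x : vec n) (i : 'I_n) (t : R) : vec n :=
  fun j => x j + (if j == i then t else 0).
Definition partial (n : nat) (h : vec n -> R) (i : 'I_n) (x : vec n) : R :=
  epsilon (inhabits 0)
    (fun l => derivable_pt_lim (fun t => h (shift x i t)) 0 l).
Fixpoint dpart (n : nat) (l : seq 'I_n) (h : vec n -> R) : vec n -> R :=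
  match l with
  | [::] => h
  | i :: l' => partial (dpart l' h) i
  end.
Definition grad (n : nat) (h : vec n -> R) (x : vec n) : vec n :=
  fun i => partial h i x.

Definition comp (n p : nat) (F : vec n -> vec p) (k : 'I_p) : vec n -> R :=
  fun x => F x k.

Definition cont_on (n : nat) (U : vec n -> Prop) (h : vec n -> R) : Prop :=
  forall x, U x -> forall eps, 0 < eps -> exists del, 0 < del /\
    forall y, U y -> vnorm (vsub y x) < del -> Rabs (h y - h x) < eps.
Definition Ck_on (n : nat) (s : nat) (U : vec n -> Prop) (h : vec n -> R) : Prop :=
  (forall l : seq 'I_n, (size l <= s)%N -> cont_on U (dpart l h)) /\
  (forall (l : seq 'I_n) (i : 'I_n) x, (size l < s)%N -> U x ->
      exists d, derivable_pt_lim (fun t => dpart l h (shift x i t)) 0 d).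
Definition ball0 (n : nat) (rho : R) : vec n -> Prop := fun x => vnorm x < rho.

(** E_[s](n,p): germs at 0 of C^s maps (R^n,0) -> (R^p,0) (represented by
    maps defined on R^n that are C^s on some ball about 0 and vanish at 0). *)
Definition Egerm (n p : nat) (s : nat) (F : vec n -> vec p) : Prop :=
  (forall k, F (@vzero n) k = 0) /\
  exists rho, 0 < rho /\ forall k, Ck_on s (@ball0 n rho) (comp F k).

Definition jet_eq (n p : nat) (Sigma : vec n -> Prop) (r : nat)
    (f g : vec n -> vec p) : Prop :=
  exists rho, 0 < rho /\ forall x, Sigma x -> vnorm x < rho ->
    forall (k : 'I_p) (l : seq 'I_n), (size l <= r)%N ->
      dpart l (comp f k) x = dpart l (comp g k) x.

Definition kuo_df (n p : nat) (F : vec n -> vec p) (x : vec n) : R :=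
  kuo (fun i : 'I_p => grad (comp F i) x).

Definition gram_quot (n p : nat) (F : vec n -> vec p) (x : vec n) : R :=
  gram (fun i : 'I_p => grad (comp F i) x) /
  \big[Rplus/0]_(j < p) gram (fun i : 'I_p.-1 => grad (comp F (lift j i)) x).

Definition dstar (n p : nat) (F : vec n -> vec p) (x : vec n) (y : vec p) : vec n :=
  fun m => \big[Rplus/0]_(i < p) (y i * grad (comp F i) x m).

(** Real power with the convention 0^a = 0 (only used with base d(x,Sigma) >= 0). *)
Definition rpow (x a : R) : R := if Rlt_dec 0 x then Rpower x a else 0.

Definition gtrsim (n : nat) (phi psi : vec n -> R) : Prop :=
  exists K, 0 < K /\ exists rho, 0 < rho /\
    forall x, vnorm x <= rho -> psi x <= K * phi x.

Definition gtrsim_sphere (n p : nat) (phi psi : vec n -> vec p -> R) : Prop :=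
  exists K, 0 < K /\ exists rho, 0 < rho /\
    forall x y, vnorm x <= rho -> vnorm y = 1 -> psi x y <= K * phi x y.

(* For a family v_1, ..., v_p of vectors, three measures of its degeneracy
   agree up to the factor sqrt p: the Kuo distance kappa(v), the square root
   of the Gram quotient (which equals 1 / tr(G^-1) for the Gram matrix G), and
   min_{|y| = 1} |sum_i y_i v_i|.  This gives (1) <-> (4) and (2) <-> (3).
   For (3) <-> (4): as j^r g = j^r f on Sigma, Taylor's formula at a point of
   Sigma nearest to x gives |dg^*(x) y - df^*(x) y| <= C d(x,Sigma)^r; after
   multiplication by d(x,Sigma) the error C d^(r+1) = C d^(r+1-delta) d^delta
   is absorbed by the right-hand side near 0. *)

From Pilot Require Import Defs.
From Stdlib Require Import Reals Lra Psatz ClassicalEpsilon FunctionalExtensionality Classical.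
From mathcomp Require Import all_boot all_order all_algebra perm.
From mathcomp Require Import Rstruct.
From mathcomp Require lra.
Set Implicit Arguments.
Unset Strict Implicit.
Local Open Scope R_scope.

Lemma sumR_ge0 (n : nat) (F : 'I_n -> R) :
  (forall i, 0 <= F i) -> 0 <= \big[Rplus/0]_(i < n) F i.
Proof. by move=> F0; elim/big_ind: _ => // *; lra. Qed.

Lemma sumR_le (n : nat) (F G : 'I_n -> R) :
  (forall i, F i <= G i) -> \big[Rplus/0]_(i < n) F i <= \big[Rplus/0]_(i < n) G i.
Proof. by move=> FG; elim/big_ind2: _ => // *; lra. Qed.

Lemma sumR_lt (n : nat) (F G : 'I_n -> R) : (0 < n)%N ->
  (forall i, F i < G i) -> \big[Rplus/0]_(i < n) F i < \big[Rplus/0]_(i < n) G i.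
Proof.
case: n F G => [//|n] F G _ FG; rewrite !big_ord_recr /=.
by apply: Rplus_le_lt_compat => //; apply: sumR_le => i; apply: Rlt_le.
Qed.

Lemma sumR_abs (n : nat) (F : 'I_n -> R) :
  Rabs (\big[Rplus/0]_(i < n) F i) <= \big[Rplus/0]_(i < n) Rabs (F i).
Proof.
elim/big_ind2: _ => [|a b c d ? ?|i _]; [rewrite Rabs_R0; lra| |lra].
by apply: Rle_trans (Rabs_triang _ _) _; lra.
Qed.

Lemma sumR_const (n : nat) (c : R) : \big[Rplus/0]_(i < n) c = INR n * c.
Proof. by elim: n => [|n IH]; rewrite ?big_ord0 ?big_ord_recr ?IH ?S_INR /=; lra. Qed.

Lemma sumR_add (n : nat) (F G : 'I_n -> R) :
  \big[Rplus/0]_(i < n) (F i + G i) =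
  \big[Rplus/0]_(i < n) F i + \big[Rplus/0]_(i < n) G i.
Proof. exact: big_split. Qed.

Lemma sumR_scale (n : nat) (c : R) (F : 'I_n -> R) :
  \big[Rplus/0]_(i < n) (c * F i) = c * \big[Rplus/0]_(i < n) F i.
Proof. by rewrite big_distrr. Qed.

Lemma sumR_sub (n : nat) (F G : 'I_n -> R) :
  \big[Rplus/0]_(i < n) (F i - G i) =
  \big[Rplus/0]_(i < n) F i - \big[Rplus/0]_(i < n) G i.
Proof.
rewrite (eq_bigr (fun i => F i + -1 * G i)) => [|i _]; last ring.
by rewrite sumR_add sumR_scale; ring.
Qed.

Lemma sumR_ge_term (n : nat) (F : 'I_n -> R) (i : 'I_n) :
  (forall j, 0 <= F j) -> F i <= \big[Rplus/0]_(j < n) F j.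
Proof.
move=> F0; rewrite (bigD1 i) //= -{1}(Rplus_0_r (F i)); apply: Rplus_le_compat_l.
by elim/big_ind: _ => [|*|j _]; [lra|lra|apply: F0].
Qed.

Lemma exists_ge_mean (n : nat) (F : 'I_n -> R) : (0 < n)%N ->
  exists i, \big[Rplus/0]_(j < n) F j <= INR n * F i.
Proof.
move=> n0; apply: NNPP => small.
have : \big[Rplus/0]_(i < n) (INR n * F i) < \big[Rplus/0]_(i < n) \big[Rplus/0]_(j < n) F j.
  by apply: sumR_lt => // i; apply: Rnot_le_lt => ?; apply: small; exists i.
by rewrite sumR_scale sumR_const; lra.
Qed.

Lemma dot_ge0 (n : nat) (x : vec n) : 0 <= dot x x.
Proof. by apply: sumR_ge0 => i; nra. Qed.

Lemma vnorm_ge0 (n : nat) (x : vec n) : 0 <= vnorm x.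
Proof. exact: sqrt_pos. Qed.

Lemma vnorm_sq (n : nat) (x : vec n) : vnorm x * vnorm x = dot x x.
Proof. by rewrite /vnorm sqrt_sqrt //; apply: dot_ge0. Qed.

Lemma vnorm_ext (n : nat) (x y : vec n) : (forall i, x i = y i) -> vnorm x = vnorm y.
Proof. by move=> /functional_extensionality ->. Qed.

Lemma vnorm0 (n : nat) : vnorm (@vzero n) = 0.
Proof. by rewrite /vnorm /dot /vsum big1 ?sqrt_0 // => i _; rewrite /vzero; ring. Qed.

Lemma le_vnorm_sq (n : nat) (x : vec n) (a : R) :
  0 <= a -> a * a <= dot x x -> a <= vnorm x.
Proof. by move=> a0 ax; rewrite -(sqrt_square a) //; apply: sqrt_le_1_alt. Qed.

Lemma vnorm_le_sq (n : nat) (x : vec n) (a : R) :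
  0 <= a -> dot x x <= a * a -> vnorm x <= a.
Proof. by move=> a0 xa; rewrite -(sqrt_square a) //; apply: sqrt_le_1_alt. Qed.

Lemma coord_le_vnorm (n : nat) (x : vec n) (i : 'I_n) : Rabs (x i) <= vnorm x.
Proof.
apply: le_vnorm_sq; first exact: Rabs_pos.
rewrite -Rabs_mult Rabs_pos_eq; last nra.
by apply: (sumR_ge_term (F := fun j => x j * x j)) => j; nra.
Qed.

Lemma vnorm_le_coord_bound (n : nat) (x : vec n) (c : R) :
  (forall i, Rabs (x i) <= c) -> vnorm x <= sqrt (INR n) * c.
Proof.
case: n x => [|n] x xc.
  by rewrite /vnorm /dot /vsum big_ord0 sqrt_0 /=; lra.
have c0 : 0 <= c by apply: Rle_trans (xc ord0); apply: Rabs_pos.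
rewrite -(sqrt_square c) // -sqrt_mult; [|apply: pos_INR|nra].
apply: sqrt_le_1_alt; rewrite /dot /vsum -sumR_const; apply: sumR_le => i.
have := Rsqr_abs (x i); have := xc i; have := Rabs_pos (x i); rewrite /Rsqr; nra.
Qed.

Lemma dot_sq_le (n : nat) (x y : vec n) : dot x y * dot x y <= dot x x * dot y y.
Proof.
set w := fun i => dot x x * y i - dot x y * x i.
have key : dot x x * (dot x x * dot y y - dot x y * dot x y) = dot w w.
  rewrite [dot w w]/dot /vsum (eq_bigr (fun i => dot x x * dot x x * (y i * y i) +
    (-2 * dot x x * dot x y * (x i * y i) + dot x y * dot x y * (x i * x i)))) => [|i _].
    by rewrite !sumR_add !sumR_scale /dot /vsum; ring.
  by rewrite /w; ring.
have w0 := dot_ge0 w.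
have [a0|a0] := Rle_lt_or_eq_dec _ _ (dot_ge0 x).
  by have := Rmult_le_pos _ _ (Rlt_le _ _ a0) w0; rewrite -key; nra.
have x0 i : x i = 0.
  by have := coord_le_vnorm x i; rewrite /vnorm -a0 sqrt_0; have := Rabs_pos (x i); split_Rabs; lra.
rewrite -a0 /dot /vsum big1 => [|i _]; last by rewrite x0; ring.
by have := dot_ge0 y; nra.
Qed.

Lemma dot_le (n : nat) (x y : vec n) : dot x y <= vnorm x * vnorm y.
Proof.
have := dot_sq_le x y; rewrite -!vnorm_sq => cs.
have xy0 := Rmult_le_pos _ _ (vnorm_ge0 x) (vnorm_ge0 y).
by apply: Rnot_lt_le => lt; nra.
Qed.

Lemma vnorm_triangle (n : nat) (u v w : vec n) :
  (forall i, w i = u i + v i) -> vnorm w <= vnorm u + vnorm v.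
Proof.
move=> uvw; apply: vnorm_le_sq; first by have := vnorm_ge0 u; have := vnorm_ge0 v; lra.
have -> : dot w w = dot u u + 2 * dot u v + dot v v.
  rewrite /dot /vsum (eq_bigr (fun i => u i * u i + (2 * (u i * v i) + v i * v i))) => [|i _].
    by rewrite !sumR_add sumR_scale /dot /vsum; ring.
  by rewrite uvw; ring.
by have := dot_le u v; rewrite -!vnorm_sq => ?; nra.
Qed.

Lemma vnorm_scale (n : nat) (c : R) (u v : vec n) :
  (forall i, v i = c * u i) -> vnorm v = Rabs c * vnorm u.
Proof.
move=> uv; rewrite /vnorm -sqrt_Rsqr_abs -sqrt_mult; [|exact: Rle_0_sqr|exact: dot_ge0].
congr sqrt; rewrite /dot /vsum /Rsqr big_distrr /=.
by apply: eq_bigr => i _; rewrite uv; ring.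
Qed.

Lemma vnorm_vsubC (n : nat) (x y : vec n) : vnorm (vsub x y) = vnorm (vsub y x).
Proof.
rewrite (@vnorm_scale _ (-1) (vsub y x)) => [|i]; last by rewrite /vsub; ring.
by rewrite Rabs_Ropp Rabs_R1; ring.
Qed.

Lemma vnorm_vsub0 (n : nat) (x : vec n) : vnorm (vsub x vzero) = vnorm x.
Proof. by apply: vnorm_ext => i; rewrite /vsub /vzero; ring. Qed.

Lemma vnorm_le_vsub (n : nat) (x y : vec n) : vnorm x <= vnorm y + vnorm (vsub x y).
Proof. by apply: vnorm_triangle => i; rewrite /vsub; ring. Qed.

Lemma Rinf_is_glb (E : R -> Prop) :
  (exists x, E x) -> (exists m, forall y, E y -> m <= y) -> is_glb E (Rinf E).
Proof.
move=> [x Ex] [m Em].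
have bounded : bound (fun z => E (- z)) by exists (- m) => z /Em; lra.
have inhabited : exists z, E (- z) by exists (- x); rewrite Ropp_involutive.
have [l [ub lub]] := completeness _ bounded inhabited.
apply: (epsilon_spec (inhabits 0) (is_glb E)); exists (- l); split.
  move=> y Ey; have : - y <= l by apply: ub; rewrite Ropp_involutive.
  lra.
move=> b Eb; have : l <= - b by apply: lub => z /Eb; lra.
lra.
Qed.

Lemma Rinf_le (E : R -> Prop) y :
  E y -> (exists m, forall y, E y -> m <= y) -> Rinf E <= y.
Proof. by move=> Ey Eb; apply: (Rinf_is_glb (ex_intro _ y Ey) Eb).1. Qed.

Lemma Rinf_ge (E : R -> Prop) b :
  (exists x, E x) -> (forall y, E y -> b <= y) -> b <= Rinf E.
Proof. by move=> En Eb; apply: (Rinf_is_glb En (ex_intro _ b Eb)).2. Qed.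

Lemma Rinf_lt (E : R -> Prop) e : (exists x, E x) ->
  (exists m, forall y, E y -> m <= y) -> Rinf E < e -> exists y, E y /\ y < e.
Proof.
move=> En Eb Ee; apply: NNPP => none.
suff : e <= Rinf E by lra.
by apply: Rinf_ge => // y Ey; apply: Rnot_lt_le => ye; apply: none; exists y.
Qed.

Section Distance.
Variables (n : nat) (S : vec n -> Prop).
Hypothesis S_nonempty : exists y, S y.

Let dists (x : vec n) : R -> Prop := fun d => exists y, S y /\ d = vnorm (vsub x y).

Let dists_nonempty x : exists d, dists x d.
Proof. by have [y Sy] := S_nonempty; exists (vnorm (vsub x y)), y. Qed.

Let dists_ge0 x : exists m, forall d, dists x d -> m <= d.
Proof. by exists 0 => d [y [_ ->]]; apply: vnorm_ge0. Qed.

Lemma dist_set_ge0 x : 0 <= dist_set S x.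
Proof. by apply: Rinf_ge (dists_nonempty x) _ => d [y [_ ->]]; apply: vnorm_ge0. Qed.

Lemma dist_set_le x y : S y -> dist_set S x <= vnorm (vsub x y).
Proof. by move=> Sy; apply: Rinf_le (dists_ge0 x); exists y. Qed.

Lemma dist_set_lt x e : dist_set S x < e -> exists y, S y /\ vnorm (vsub x y) < e.
Proof. by case/(Rinf_lt (dists_nonempty x) (dists_ge0 x)) => d [[y [Sy ->]] ?]; exists y. Qed.

End Distance.

Definition lincomb (n p : nat) (v : 'I_p -> vec n) (y : vec p) : vec n :=
  fun m => \big[Rplus/0]_(i < p) (y i * v i m).

Section LinearCombination.
Variables (n p : nat) (v : 'I_p -> vec n).

Lemma lincomb_scale (c : R) (y : vec p) m :
  lincomb v (fun i => c * y i) m = c * lincomb v y m.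
Proof. by rewrite /lincomb -sumR_scale; apply: eq_bigr => i _; ring. Qed.

Lemma vsub_lincomb (i : 'I_p) (c : vec p) m :
  vsub (v i) (lincomb v c) m = lincomb v (fun j => (if j == i then 1 else 0) - c j) m.
Proof.
rewrite /vsub /lincomb [in RHS](eq_bigr (fun j => (if j == i then v j m else 0) - c j * v j m)).
  by rewrite sumR_sub -big_mkcond big_pred1_eq.
by move=> j _; case: (j == i); ring.
Qed.

Lemma lincomb_normalize (z : vec p) : 0 < vnorm z ->
  exists y, vnorm y = 1 /\ vnorm (lincomb v y) = / vnorm z * vnorm (lincomb v z).
Proof.
move=> z0; have iz0 := Rinv_0_lt_compat _ z0.
exists (fun i => / vnorm z * z i); split.
  by rewrite (vnorm_scale (c := / vnorm z) (u := z)) // Rabs_pos_eq; [field|]; lra.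
by rewrite (vnorm_scale (c := / vnorm z) (u := lincomb v z)) ?Rabs_pos_eq //;
  [lra|move=> m; apply: lincomb_scale].
Qed.

Lemma span_except_lincomb (i : 'I_p) (c : vec p) : c i = 0 -> span_except v i (lincomb v c).
Proof. by move=> ci; exists c. Qed.

Let kuo_dists : R -> Prop :=
  fun d => exists i : 'I_p, d = dist_set (span_except v i) (v i).

Let span_except_nonempty i : exists w, span_except v i w.
Proof. by exists (lincomb v (fun _ => 0)); apply: span_except_lincomb. Qed.

Let kuo_dists_ge0 : exists m, forall d, kuo_dists d -> m <= d.
Proof. by exists 0 => d [i ->]; apply: dist_set_ge0. Qed.

Lemma kuo_ge0 : (0 < p)%N -> 0 <= kuo v.
Proof.
move=> p0; set i0 := Ordinal p0.
apply: Rinf_ge; first by exists (dist_set (span_except v i0) (v i0)), i0.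
by move=> d [i ->]; apply: dist_set_ge0.
Qed.

(* A unit vector has a coordinate of size at least 1/sqrt p; dividing by it
   exhibits [v i] as an element of the span of the others plus a small error. *)
Lemma kuo_le_lincomb (y : vec p) : (0 < p)%N -> vnorm y = 1 ->
  kuo v <= sqrt (INR p) * vnorm (lincomb v y).
Proof.
move=> p0 y1; have p0' : 0 < INR p by apply: lt_0_INR; apply/ltP.
have [i yi] := exists_ge_mean (fun i => y i * y i) p0.
change (dot y y <= INR p * (y i * y i)) in yi; rewrite -vnorm_sq y1 in yi.
have yi_pos : 0 < y i * y i by nra.
have yi0 : y i <> 0 by move=> h; rewrite h in yi_pos; lra.
set c := fun j => (if j == i then 1 else 0) - y j / y i.
have ci : c i = 0 by rewrite /c eqxx; field.
have inv_yi : Rabs (/ y i) <= sqrt (INR p).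
  rewrite -(sqrt_Rsqr (Rabs (/ y i))); last exact: Rabs_pos.
  apply: sqrt_le_1_alt.
  rewrite -Rsqr_abs /Rsqr -Rinv_mult.
  by apply: (Rmult_le_reg_r (y i * y i)) => //; rewrite Rinv_l; lra.
have kuo_le_dist : kuo v <= dist_set (span_except v i) (v i).
  by apply: (Rinf_le _ kuo_dists_ge0); exists i.
apply: (Rle_trans _ _ _ kuo_le_dist).
apply: Rle_trans (dist_set_le _ (span_except_lincomb ci)) _.
rewrite (vnorm_scale (c := / y i) (u := lincomb v y)).
  by apply: Rmult_le_compat_r => //; apply: vnorm_ge0.
move=> m; rewrite vsub_lincomb -lincomb_scale; apply: eq_bigr => j _.
by rewrite /c; case: (j == i); field.
Qed.

Lemma kuo_lt_lincomb (e : R) : (0 < p)%N -> kuo v < e ->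
  exists y, vnorm y = 1 /\ vnorm (lincomb v y) < e.
Proof.
move=> p0 ke.
have [_ [[i ->] di]] := Rinf_lt (ex_intro _ _ (ex_intro _ (Ordinal p0) erefl)) kuo_dists_ge0 ke.
have [w [[c [ci wc]] vw]] := dist_set_lt (span_except_nonempty i) di.
have {}wc : w = lincomb v c by apply: functional_extensionality.
rewrite {w}wc in vw.
set z := fun j => (if j == i then 1 else 0) - c j.
have z1 : 1 <= vnorm z by have := coord_le_vnorm z i; rewrite /z eqxx ci Rminus_0_r Rabs_R1.
have [y [y1 yz]] := lincomb_normalize (Rlt_le_trans _ _ _ Rlt_0_1 z1).
exists y; split => //; rewrite yz -(vnorm_ext (vsub_lincomb i c)).
have iz1 : / vnorm z <= 1 by rewrite -Rinv_1; apply: Rinv_le_contravar; lra.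
have := vnorm_ge0 (vsub (v i) (lincomb v c)).
have := Rinv_0_lt_compat _ (Rlt_le_trans _ _ _ Rlt_0_1 z1).
nra.
Qed.

End LinearCombination.

Section GramMatrix.
Import Order.TTheory GRing.Theory Num.Theory mathcomp.algebra_tactics.lra.
Local Open Scope ring_scope.

Definition sqnorm (k : nat) (u : 'rV[R]_k) : R := \sum_i u 0 i ^+ 2.

Lemma sqnorm_ge0 (k : nat) (u : 'rV[R]_k) : 0 <= sqnorm u.
Proof. by apply: sumr_ge0 => i _; apply: sqr_ge0. Qed.

Lemma sqnorm_eq0 (k : nat) (u : 'rV[R]_k) : sqnorm u = 0 -> u = 0.
Proof.
move=> u0; apply/rowP => j; rewrite mxE.
have /(_ j isT) /eqP := psumr_eq0P (fun j _ => sqr_ge0 (u 0 j)) u0.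
by rewrite sqrf_eq0 => /eqP.
Qed.

Lemma sqnorm_row (k m : nat) (L : 'M[R]_(k, m)) (j : 'I_k) : sqnorm (row j L) = (L *m L^T) j j.
Proof. by rewrite mxE; apply: eq_bigr => i _; rewrite !mxE expr2. Qed.

Lemma sqnormE (k : nat) (u : 'rV[R]_k) : sqnorm u = (u *m u^T) 0 0.
Proof. by rewrite -sqnorm_row; congr sqnorm; apply/rowP => i; rewrite !mxE. Qed.

Lemma row_dot_sq_le (k : nat) (u w : 'rV[R]_k) :
  ((u *m w^T) 0 0) ^+ 2 <= sqnorm u * sqnorm w.
Proof.
have dotE (a b : 'rV[R]_k) : (a *m b^T) 0 0 = dot (fun i => a 0 i) (fun i => b 0 i).
  by rewrite mxE; apply: eq_bigr => i _; rewrite !mxE.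
by rewrite !sqnormE !dotE expr2; apply/RleP; apply: dot_sq_le.
Qed.

Lemma sqnorm_mul_le (k m : nat) (L : 'M[R]_(k, m)) (y : 'rV[R]_k) :
  sqnorm (y *m L) <= sqnorm y * \tr (L *m L^T).
Proof.
have trE : \tr (L *m L^T) = \sum_j sqnorm (row j L^T).
  rewrite /mxtrace (eq_bigr (fun i => sqnorm (row i L))) => [|i _]; last by rewrite sqnorm_row.
  by rewrite /sqnorm exchange_big; apply: eq_bigr => j _; apply: eq_bigr => i _; rewrite !mxE.
rewrite trE mulr_sumr {1}/sqnorm; apply: ler_sum => j _.
have -> : (y *m L) 0 j = (y *m (row j L^T)^T) 0 0.
  by rewrite !mxE; apply: eq_bigr => i _; rewrite !mxE.
exact: row_dot_sq_le.
Qed.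

Variables (p n : nat) (V : 'M[R]_(p, n)).
Let G := V *m V^T.

Definition gram_ratio : R := \det G / \tr (\adj G).

Let GT : G^T = G.
Proof. by rewrite /G trmx_mul trmxK. Qed.

Let sqnorm_mulV (y : 'rV[R]_p) : sqnorm (y *m V) = (y *m G *m y^T) 0 0.
Proof. by rewrite sqnormE trmx_mul /G !mulmxA. Qed.

Section Invertible.
Hypothesis detG : \det G != 0.
Let H := invmx G.

Let HG : H *m G = 1%:M.
Proof. by apply: mulVmx; rewrite unitmxE unitfE. Qed.

Let GH : G *m H = 1%:M.
Proof. by apply: mulmxV; rewrite unitmxE unitfE. Qed.

Let HT : H^T = H.
Proof. by rewrite /H trmx_inv GT. Qed.

(* The rows of [G^-1 V] form the family dual to the rows of [V]. *)
Let LLT : (H *m V) *m (H *m V)^T = H.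
Proof. by rewrite trmx_mul HT mulmxA -(mulmxA H V) -/G HG mul1mx. Qed.

Lemma gram_ratio_inv : gram_ratio = (\tr H)^-1.
Proof.
have adjG : \adj G = \det G *: H by rewrite /H /invmx unitmxE unitfE detG scalerA mulfV // scale1r.
by rewrite /gram_ratio RdivE adjG mxtraceZ invfM mulrA mulfV // mul1r.
Qed.

Lemma gram_inv_diag_ge0 (j : 'I_p) : 0 <= H j j.
Proof. by rewrite -LLT -sqnorm_row sqnorm_ge0. Qed.

Lemma tr_gram_inv_gt0 : (0 < p)%N -> 0 < \tr H.
Proof.
move=> p0; rewrite lt_def sumr_ge0 ?andbT => [|j _]; last exact: gram_inv_diag_ge0.
apply/eqP => tr0.
have L0 : H *m V = 0.
  apply/row_matrixP => j; rewrite row0; apply: sqnorm_eq0; rewrite sqnorm_row LLT.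
  exact: (psumr_eq0P (fun j _ => gram_inv_diag_ge0 j) tr0).
have /matrixP /(_ (Ordinal p0) (Ordinal p0)) := HG.
by rewrite -LLT L0 !mul0mx !mxE eqxx => /eqP; rewrite eq_sym oner_eq0.
Qed.

Lemma gram_ratio_le_invertible (y : 'rV[R]_p) : gram_ratio * sqnorm y <= sqnorm (y *m V).
Proof.
set L := H *m V; set s := sqnorm y; set A := sqnorm (y *m V); set B := sqnorm (y *m L).
have VL : ((y *m V) *m (y *m L)^T) 0 0 = s.
  by rewrite /s sqnormE /L !trmx_mul HT !mulmxA -(mulmxA y V) -/G -(mulmxA y G) GH mulmx1.
have cs := row_dot_sq_le (y *m V) (y *m L); rewrite VL -/A -/B in cs.
have BT : B <= s * \tr H by have := sqnorm_mul_le L y; rewrite LLT.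
have s0 : 0 <= s := sqnorm_ge0 y; have A0 : 0 <= A := sqnorm_ge0 _.
rewrite gram_ratio_inv; have [->|s_neq0] := eqVneq s 0; first by rewrite mulr0.
have s_gt0 : 0 < s by rewrite lt_def s_neq0.
have sAT : s <= A * \tr H by nra.
by rewrite ler_pdivrMl; nra.
Qed.

(* Take the row of [G^-1] with the largest diagonal entry. *)
Lemma exists_gram_ratio_ge_invertible : (0 < p)%N ->
  exists z, 0 < sqnorm z /\ sqnorm (z *m V) <= p%:R * gram_ratio * sqnorm z.
Proof.
move=> p0; set T := \tr H; have T_gt0 : 0 < T := tr_gram_inv_gt0 p0.
have [j Tj] : exists j, T <= p%:R * H j j.
  by have [j /RleP] := exists_ge_mean (fun j => H j j) p0; rewrite INRE; exists j.
have Hjj0 := gram_inv_diag_ge0 j; have p_ge0 : 0 <= p%:R :> R := ler0n _ _.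
have zV : sqnorm (row j H *m V) = H j j by rewrite -row_mul sqnorm_row LLT.
have Hjj_sq : H j j ^+ 2 <= sqnorm (row j H).
  rewrite /sqnorm (bigD1 j) //= mxE lerDl.
  by apply: sumr_ge0 => i _; apply: sqr_ge0.
have Hjj_gt0 : 0 < H j j by nra.
exists (row j H); split; first by nra.
by rewrite zV gram_ratio_inv -/T -mulrA mulrCA ler_pdivlMl //; nra.
Qed.

End Invertible.

Lemma gram_ratio_le (y : 'rV[R]_p) : gram_ratio * sqnorm y <= sqnorm (y *m V).
Proof.
have [det0|detG] := eqVneq (\det G) 0; last exact: gram_ratio_le_invertible.
by rewrite /gram_ratio RdivE det0 !mul0r sqnorm_ge0.
Qed.

Lemma exists_gram_ratio_ge : (0 < p)%N ->
  exists z, 0 < sqnorm z /\ sqnorm (z *m V) <= p%:R * gram_ratio * sqnorm z.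
Proof.
have [det0 _|] := eqVneq (\det G) 0; last exact: exists_gram_ratio_ge_invertible.
have /eqP/det0P [z z_neq0 zG] := det0.
exists z; split.
  by rewrite lt_def sqnorm_ge0 andbT; apply: contra z_neq0 => /eqP /sqnorm_eq0 ->.
by rewrite sqnorm_mulV zG mul0mx mxE /gram_ratio RdivE det0 !(mul0r, mulr0).
Qed.

End GramMatrix.

Definition rowv (p : nat) (y : vec p) : 'rV[R]_p := \row_i y i.

Definition family_mx (n p : nat) (v : 'I_p -> vec n) : 'M[R]_(p, n) := \matrix_(i, m) v i m.

Lemma detE (k : nat) (A : 'I_k -> 'I_k -> R) : det A = (\det (\matrix_(i, j) A i j))%R.
Proof.
rewrite /det /determinant; apply: eq_bigr => s _.
rewrite [in RHS](eq_bigr (fun i => A i (s i))) => [|i _]; last by rewrite mxE.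
by case: (odd_perm s); rewrite /= ?GRing.expr1 ?GRing.expr0.
Qed.

Lemma gram_quot_ratio (n p : nat) (F : vec n -> vec p) (x : vec n) :
  gram_quot F x = gram_ratio (family_mx (fun i => grad (Defs.comp F i) x)).
Proof.
rewrite /gram_quot /gram_ratio /gram detE; congr (_ / _).
  by congr determinant; apply/matrixP => i j; rewrite !mxE; apply: eq_bigr => m _; rewrite !mxE.
rewrite /mxtrace; apply: eq_bigr => j _; rewrite /gram detE mxE /cofactor.
rewrite GRing.exprD -GRing.exprMn GRing.mulrNN GRing.mulr1 GRing.expr1n GRing.mul1r.
by congr determinant; apply/matrixP => a b; rewrite !mxE; apply: eq_bigr => m _; rewrite !mxE.
Qed.

Lemma sqnorm_rowv (p : nat) (y : vec p) : sqnorm (rowv y) = vnorm y * vnorm y.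
Proof. by rewrite vnorm_sq; apply: eq_bigr => i _; rewrite GRing.expr2 !mxE. Qed.

Lemma sqnorm_lincomb (n p : nat) (v : 'I_p -> vec n) (y : vec p) :
  sqnorm (rowv y *m family_mx v)%R = vnorm (lincomb v y) * vnorm (lincomb v y).
Proof.
rewrite vnorm_sq; apply: eq_bigr => m _; rewrite GRing.expr2 !mxE; congr (_ * _);
  by apply: eq_bigr => i _; rewrite !mxE.
Qed.

Section GramQuotient.
Variables (n p : nat) (F : vec n -> vec p) (x : vec n).
Let v := fun i : 'I_p => grad (Defs.comp F i) x.

Lemma sqrt_gram_quot_le_dstar (y : vec p) : vnorm y = 1 ->
  sqrt (gram_quot F x) <= vnorm (dstar F x y).
Proof.
move=> y1; have /RleP := gram_ratio_le (family_mx v) (rowv y).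
rewrite sqnorm_rowv sqnorm_lincomb -gram_quot_ratio y1 Rmult_1_r GRing.mulr1 => q_le.
rewrite -(sqrt_square (vnorm (dstar F x y))); last exact: vnorm_ge0.
exact: sqrt_le_1_alt.
Qed.

Lemma exists_dstar_le_sqrt_gram_quot : (0 < p)%N ->
  exists y, vnorm y = 1 /\ vnorm (dstar F x y) <= sqrt (INR p) * sqrt (gram_quot F x).
Proof.
move=> p0; have [z [z0 /RleP zV]] := exists_gram_ratio_ge (family_mx v) p0.
set y := fun i => z ord0 i; have zy : z = rowv y by apply/rowP => i; rewrite mxE.
rewrite {}zy sqnorm_rowv sqnorm_lincomb -gram_quot_ratio in z0 zV.
have {}zV : vnorm (lincomb v y) * vnorm (lincomb v y) <=
    INR p * gram_quot F x * (vnorm y * vnorm y) by rewrite INRE; exact: zV.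
have {}z0 : 0 < vnorm y * vnorm y by apply/RltP.
have y_gt0 : 0 < vnorm y by have := vnorm_ge0 y => ?; nra.
have q0 : 0 <= gram_quot F x.
  apply: Rnot_lt_le => q_lt0; have p_gt0 : 0 < INR p by apply: lt_0_INR; apply/ltP.
  have ? : INR p * gram_quot F x < 0 by nra.
  have ? : INR p * gram_quot F x * (vnorm y * vnorm y) < 0 by nra.
  by have := Rle_0_sqr (vnorm (lincomb v y)); rewrite /Rsqr; lra.
have [y' [y'1 y'y]] := lincomb_normalize v y_gt0.
exists y'; split => //; change (vnorm (lincomb v y') <= sqrt (INR p) * sqrt (gram_quot F x)).
rewrite y'y -sqrt_mult //; last exact: pos_INR.
set a := / vnorm y; have a_gt0 : 0 < a := Rinv_0_lt_compat _ y_gt0.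
have ay : a * vnorm y = 1 by rewrite /a Rinv_l //; lra.
have scaled : (a * vnorm (lincomb v y)) * (a * vnorm (lincomb v y)) <= INR p * gram_quot F x.
  have := Rmult_le_compat_l (a * a) _ _ (Rle_0_sqr a) zV.
  have -> : a * a * (INR p * gram_quot F x * (vnorm y * vnorm y)) =
    INR p * gram_quot F x * ((a * vnorm y) * (a * vnorm y)) by ring.
  by rewrite ay; lra.
rewrite -(sqrt_square (a * vnorm (lincomb v y))); first exact: sqrt_le_1_alt.
by have := vnorm_ge0 (lincomb v y) => ?; nra.
Qed.

End GramQuotient.

Section MeanValue.
Variable n : nat.
Implicit Types (y z w u : vec n).

Definition box y z w : Prop := forall j, (y j <= w j <= z j) \/ (z j <= w j <= y j).

Lemma box_refl y z : box y z z.
Proof. by move=> j; case: (Rle_dec (y j) (z j)) => ?; [left|right]; lra. Qed.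

Lemma box_trans y z w u : box y z w -> box y w u -> box y z u.
Proof. by move=> yzw ywu j; case: (yzw j); case: (ywu j) => ? ?; [left|lra|lra|right]; lra. Qed.

Lemma box_vnorm_sub y z w : box y z w -> vnorm (vsub w y) <= vnorm (vsub z y).
Proof.
move=> yzw; apply: sqrt_le_1_alt; apply: sumR_le => j.
by rewrite /vsub; case: (yzw j) => ?; nra.
Qed.

Lemma box_vnorm_sq y z w : box y z w -> vnorm w * vnorm w <= vnorm y * vnorm y + vnorm z * vnorm z.
Proof.
move=> yzw; rewrite !vnorm_sq /dot /vsum -sumR_add; apply: sumR_le => j.
by case: (yzw j) => ?; case: (Rle_dec 0 (w j)) => ?; nra.
Qed.

Lemma shift_shift w i t s : shift (shift w i t) i s = shift w i (t + s).
Proof. by apply: functional_extensionality => j; rewrite /shift; case: (j == i); ring. Qed.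

Lemma shift0 w i : shift w i 0 = w.
Proof. by apply: functional_extensionality => j; rewrite /shift; case: (j == i); ring. Qed.

Lemma partial_spec (h : vec n -> R) i w :
  (exists d, derivable_pt_lim (fun s => h (shift w i s)) 0 d) ->
  derivable_pt_lim (fun s => h (shift w i s)) 0 (partial h i w).
Proof. exact: epsilon_spec. Qed.

Lemma derivable_pt_lim_translate (phi : R -> R) t d :
  derivable_pt_lim (fun s => phi (t + s)) 0 d -> derivable_pt_lim phi t d.
Proof.
move=> phi_d eps eps0; have [del del_d] := phi_d eps eps0; exists del => h h0 hdel.
by have := del_d h h0 hdel; rewrite Rplus_0_r Rplus_0_l.
Qed.

(* Change one coordinate at a time, going from [y] to [z] inside the box. *)
Lemma mvt_box (phi : vec n -> R) (phi' : 'I_n -> vec n -> R) y z B : 0 <= B ->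
  (forall k w, box y z w -> derivable_pt_lim (fun s => phi (shift w k s)) 0 (phi' k w)) ->
  (forall k w, box y z w -> Rabs (phi' k w) <= B) ->
  Rabs (phi z - phi y) <= INR n * B * vnorm (vsub z y).
Proof.
move=> B0 phi_d phi'_le.
pose P (m : nat) : vec n := fun j => if (j < m)%N then z j else y j.
have Pn : P n = z by apply: functional_extensionality => j; rewrite /P ltn_ord.
have zy0 := vnorm_ge0 (vsub z y).
suff /(_ n (leqnn n)) : forall m, (m <= n)%N ->
  Rabs (phi (P m) - phi y) <= INR m * B * vnorm (vsub z y) by rewrite Pn.
elim=> [|m IH] mn.
  have -> : P 0%N = y by apply: functional_extensionality.
  by rewrite Rminus_diag Rabs_R0 /=; lra.
pose k := Ordinal mn; set T := z k - y k.
have PS : P m.+1 = shift (P m) k T.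
  apply: functional_extensionality => j; rewrite /P /shift /T ltnS.
  have -> : (j == k) = (nat_of_ord j == m) by [].
  case: (ltngtP j m) => jm /=; try ring.
  have -> : k = j by apply: val_inj.
  ring.
have in_box c : Rmin 0 T <= c <= Rmax 0 T -> box y z (shift (P m) k c).
  move=> c_in j; rewrite /shift /P; case: (eqVneq j k) => [->|jk].
    have -> : (k < m)%N = false by rewrite /= ltnn.
    by move: c_in; rewrite /Rmin /Rmax /T; case: (Rle_dec 0 _) => ? ?; [left|right]; lra.
  rewrite Rplus_0_r; case: (j < m)%N;
    by case: (Rle_dec (y j) (z j)) => ?; [left|right]; lra.
have phi_k_d c : Rmin 0 T <= c <= Rmax 0 T ->
    derivable_pt_lim (fun s => phi (shift (P m) k s)) c (phi' k (shift (P m) k c)).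
  move=> c_in; apply: derivable_pt_lim_translate.
  have -> : (fun s => phi (shift (P m) k (c + s))) = (fun s => phi (shift (shift (P m) k c) k s)).
    by apply: functional_extensionality => s; rewrite shift_shift.
  exact: phi_d k _ (in_box c c_in).
have step : Rabs (phi (P m.+1) - phi (P m)) <= B * vnorm (vsub z y).
  have [c [mvt c_in]] := MVT_abs _ _ 0 T phi_k_d.
  rewrite PS -{2}(shift0 (P m) k) mvt Rminus_0_r.
  apply: Rmult_le_compat; [exact: Rabs_pos|exact: Rabs_pos|exact: phi'_le _ _ (in_box c c_in)|].
  by have := coord_le_vnorm (vsub z y) k; rewrite /vsub.
have tri := Rabs_triang (phi (P m.+1) - phi (P m)) (phi (P m) - phi y).
have := IH (ltnW mn); rewrite S_INR.
have -> : phi (P m.+1) - phi y = phi (P m.+1) - phi (P m) + (phi (P m) - phi y) by ring.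
by move=> ?; nra.
Qed.

(* [D L] plays the role of the iterated partial derivative along [L]. *)
Lemma iterated_mvt_box (D : seq 'I_n -> vec n -> R) y z (N : nat) M : 0 <= M ->
  (forall L, (size L < N)%N -> D L y = 0) ->
  (forall L w, size L = N -> box y z w -> Rabs (D L w) <= M) ->
  (forall L k w, (size L < N)%N -> box y z w ->
     derivable_pt_lim (fun s => D L (shift w k s)) 0 (D (k :: L) w)) ->
  forall m L w, (size L + m)%N = N -> box y z w ->
    Rabs (D L w) <= (INR n * vnorm (vsub z y)) ^ m * M.
Proof.
move=> M0 D0 DN D_d.
have nzy0 : 0 <= INR n * vnorm (vsub z y) by apply: Rmult_le_pos; [exact: pos_INR|exact: vnorm_ge0].
elim=> [|m IH] L w Lm yzw; first by rewrite addn0 in Lm; rewrite /= Rmult_1_l; apply: DN.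
have LN : (size L < N)%N by rewrite -Lm addnS ltnS leq_addr.
have bound0 : 0 <= (INR n * vnorm (vsub z y)) ^ m * M by apply: Rmult_le_pos => //; apply: pow_le.
have D_d' k u : box y w u -> derivable_pt_lim (fun s => D L (shift u k s)) 0 (D (k :: L) u).
  by move=> ywu; apply: D_d LN (box_trans yzw ywu).
have D'_le k u : box y w u -> Rabs (D (k :: L) u) <= (INR n * vnorm (vsub z y)) ^ m * M.
  by move=> ywu; apply: IH (box_trans yzw ywu); rewrite /= addSnnS.
have := mvt_box bound0 D_d' D'_le.
rewrite D0 // Rminus_0_r => /Rle_trans; apply.
have -> : (INR n * vnorm (vsub z y)) ^ m.+1 * M =
    INR n * ((INR n * vnorm (vsub z y)) ^ m * M) * vnorm (vsub z y) by rewrite /=; ring.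
apply: Rmult_le_compat_l; last exact: box_vnorm_sub yzw.
by apply: Rmult_le_pos => //; exact: pos_INR.
Qed.

End MeanValue.

Lemma vnorm_lincomb_sub_le (n p : nat) (v w : 'I_p -> vec n) (y : vec p) (E : R) :
  vnorm y = 1 -> (forall i m, Rabs (v i m - w i m) <= E) ->
  vnorm (vsub (lincomb v y) (lincomb w y)) <= sqrt (INR n) * (INR p * E).
Proof.
move=> y1 vwE; apply: vnorm_le_coord_bound => m; rewrite /vsub /lincomb -sumR_sub.
apply: Rle_trans (sumR_abs _) _; rewrite -sumR_const; apply: sumR_le => i.
rewrite -Rmult_minus_distr_l Rabs_mult.
have := coord_le_vnorm y i; rewrite y1 => yi.
by have := vwE i m; have := Rabs_pos (y i); have := Rabs_pos (v i m - w i m) => *; nra.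
Qed.

Lemma Ck_bounded_near0 (n s : nat) (rho : R) (h : vec n -> R) (L : seq 'I_n) :
  0 < rho -> Ck_on s (ball0 rho) h -> (size L <= s)%N ->
  exists M del, 0 < del /\ forall w, vnorm w < del -> Rabs (dpart L h w) <= M.
Proof.
move=> rho0 [h_cont _] Ls.
have ball0_0 : ball0 rho (@vzero n) by rewrite /ball0 vnorm0.
have [del [del0 del_cont]] := h_cont L Ls _ ball0_0 1 Rlt_0_1.
exists (Rabs (dpart L h vzero) + 1), (Rmin del rho); split; first exact: Rmin_glb_lt.
move=> w w_small; have w_ball : ball0 rho w by apply: Rlt_le_trans w_small (Rmin_r _ _).
have := del_cont w w_ball; rewrite vnorm_vsub0 => /(_ (Rlt_le_trans _ _ _ w_small (Rmin_l _ _))).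
by have := Rabs_triang_inv (dpart L h w) (dpart L h vzero); lra.
Qed.

Lemma finite_uniform_bound (n : nat) (T : finType) (Q : T -> vec n -> R) :
  (forall t, exists M del, 0 < del /\ forall w, vnorm w < del -> Rabs (Q t w) <= M) ->
  exists M del, 0 < del /\ 0 <= M /\ forall t w, vnorm w < del -> Rabs (Q t w) <= M.
Proof.
move=> Q_bounded.
suff [M [del [del0 [M0 QM]]]] : exists M del, 0 < del /\ 0 <= M /\
    forall t w, t \in enum T -> vnorm w < del -> Rabs (Q t w) <= M.
  by exists M, del; split => //; split => // t w; apply: QM; rewrite mem_enum.
elim: (enum T) => [|a s [M [del [del0 [M0 QM]]]]].
  by exists 0, 1; split; [lra|split; [lra|]].
have [Ma [dela [dela0 QMa]]] := Q_bounded a.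
exists (Rmax M Ma), (Rmin del dela); split; first exact: Rmin_glb_lt.
split; first exact: Rle_trans M0 (Rmax_l _ _).
move=> t w; rewrite in_cons => /orP [/eqP -> | ts] w_small.
  by apply: Rle_trans (Rmax_r _ _); apply: QMa; apply: Rlt_le_trans w_small (Rmin_r _ _).
by apply: Rle_trans (Rmax_l _ _); apply: QM => //; apply: Rlt_le_trans w_small (Rmin_l _ _).
Qed.

Lemma top_derivatives_sub_bounded (n p s : nat) (f g : vec n -> vec p) :
  Egerm s f -> Egerm s g ->
  exists M del, 0 < del /\ 0 <= M /\ forall i (L : seq 'I_n) w, size L = s -> vnorm w < del ->
    Rabs (dpart L (Defs.comp g i) w - dpart L (Defs.comp f i) w) <= M.
Proof.
move=> [_ [rf [rf0 f_Ck]]] [_ [rg [rg0 g_Ck]]].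
pose Q (t : 'I_p * s.-tuple 'I_n) w :=
  dpart (tval t.2) (Defs.comp g t.1) w - dpart (tval t.2) (Defs.comp f t.1) w.
have [|M [del [del0 [M0 QM]]]] := @finite_uniform_bound n _ Q.
  case=> i L; have Ls : (size (tval L) <= s)%N by rewrite size_tuple.
  have [Mg [dg [dg0 gM]]] := Ck_bounded_near0 rg0 (g_Ck i) Ls.
  have [Mf [df [df0 fM]]] := Ck_bounded_near0 rf0 (f_Ck i) Ls.
  exists (Mg + Mf), (Rmin dg df); split; first exact: Rmin_glb_lt.
  move=> w w_small; apply: Rle_trans (Rabs_triang _ _) _; rewrite Rabs_Ropp.
  apply: Rplus_le_compat; [apply: gM|apply: fM]; apply: Rlt_le_trans w_small _.
    exact: Rmin_l.
  exact: Rmin_r.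
exists M, del; split => //; split => // i L w /eqP Ls w_small.
exact: (QM (i, Tuple Ls) w w_small).
Qed.

Lemma dist_set_le_vnorm (n : nat) (Sigma : vec n -> Prop) (x : vec n) :
  Sigma vzero -> dist_set Sigma x <= vnorm x.
Proof. by move=> S0; rewrite -vnorm_vsub0; apply: dist_set_le. Qed.

Lemma exists_near_point (n : nat) (Sigma : vec n -> Prop) (x : vec n) :
  Sigma vzero -> 0 < dist_set Sigma x ->
  exists z, Sigma z /\ vnorm (vsub x z) < 2 * dist_set Sigma x /\ vnorm z <= 3 * vnorm x.
Proof.
move=> S0 d_pos.
have [z [Sz xz]] : exists z, Sigma z /\ vnorm (vsub x z) < 2 * dist_set Sigma x.
  by apply: dist_set_lt; [exists vzero|lra].
exists z; do !split => //; have := dist_set_le_vnorm x S0.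
by have := vnorm_le_vsub z x; rewrite vnorm_vsubC; lra.
Qed.

Section JetDifference.
Variables (n p r : nat) (Sigma : vec n -> Prop) (f g : vec n -> vec p).
Hypotheses (S0 : Sigma vzero) (f_germ : Egerm (r + 1) f) (g_germ : Egerm (r + 1) g)
  (fg_jet : jet_eq Sigma r f g).

(* Taylor's estimate at a nearest point [z] of [Sigma]: the derivatives of
   [g_i - f_i] of order [<= r] vanish at [z], so the first ones are [O(|x - z|^r)]. *)
Lemma grad_sub_le : exists C rho, 0 <= C /\ 0 < rho /\
  forall x, vnorm x <= rho -> 0 < dist_set Sigma x -> forall i k,
    Rabs (grad (Defs.comp g i) x k - grad (Defs.comp f i) x k) <= C * dist_set Sigma x ^ r.
Proof.
have [_ [rf [rf0 f_Ck]]] := f_germ; have [_ [rg [rg0 g_Ck]]] := g_germ.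
have [rj [rj0 jet]] := fg_jet.
have [M [del [del0 [M0 top_le]]]] := top_derivatives_sub_bounded f_germ g_germ.
set rho := Rmin (Rmin rf rg) (Rmin rj del).
have rho0 : 0 < rho by apply: Rmin_glb_lt; apply: Rmin_glb_lt.
have [rho_f rho_g] : rho <= rf /\ rho <= rg.
  by split; apply: Rle_trans (Rmin_l _ _) _; [exact: Rmin_l|exact: Rmin_r].
have [rho_j rho_del] : rho <= rj /\ rho <= del.
  by split; apply: Rle_trans (Rmin_r _ _) _; [exact: Rmin_l|exact: Rmin_r].
exists ((2 * INR n) ^ r * M), (rho / 4); split.
  by apply: Rmult_le_pos => //; apply: pow_le; have := pos_INR n; lra.
split; first lra.
move=> x x_small d_pos i k.
have [z [Sz [xz zx]]] := exists_near_point S0 d_pos.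
set d := dist_set Sigma x in d_pos xz *.
have x0 := vnorm_ge0 x.
have box_small w : box z x w -> vnorm w < rho.
  move=> zxw; have := box_vnorm_sq zxw; have := vnorm_ge0 z; have := vnorm_ge0 w => ? ? ?.
  by apply: Rnot_le_lt => ?; nra.
pose D L w := dpart L (Defs.comp g i) w - dpart L (Defs.comp f i) w.
have D0 L : (size L < r + 1)%N -> D L z = 0.
  move=> Lr; rewrite /D (jet z Sz _ i L); [exact: Rminus_diag|lra|].
  by rewrite addn1 ltnS in Lr.
have DN L w : size L = (r + 1)%N -> box z x w -> Rabs (D L w) <= M.
  by move=> Lr zxw; apply: top_le => //; apply: Rlt_le_trans (box_small w zxw) rho_del.
have D_d L j w : (size L < r + 1)%N -> box z x w ->
    derivable_pt_lim (fun s => D L (shift w j s)) 0 (D (j :: L) w).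
  move=> Lr zxw; have w_small := box_small w zxw.
  apply: derivable_pt_lim_minus; apply: partial_spec.
    by apply: (g_Ck i).2 => //; rewrite /ball0; lra.
  by apply: (f_Ck i).2 => //; rewrite /ball0; lra.
have := iterated_mvt_box M0 D0 DN D_d (m := r) (L := [:: k]) (addnC _ _) (box_refl z x).
move=> /Rle_trans; apply.
have -> : (2 * INR n) ^ r * M * d ^ r = (2 * INR n * d) ^ r * M by rewrite !Rpow_mult_distr; ring.
apply: Rmult_le_compat_r => //.
apply: pow_incr; have := pos_INR n; have := vnorm_ge0 (vsub x z) => ? ?.
by split; nra.
Qed.

Lemma dstar_sub_le : exists C rho, 0 <= C /\ 0 < rho /\
  forall x y, vnorm x <= rho -> 0 < dist_set Sigma x -> vnorm y = 1 ->
    vnorm (vsub (dstar g x y) (dstar f x y)) <= C * dist_set Sigma x ^ r.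
Proof.
have [C [rho [C0 [rho0 grad_le]]]] := grad_sub_le.
exists (sqrt (INR n) * (INR p * C)), rho; split.
  by apply: Rmult_le_pos; [exact: sqrt_pos|apply: Rmult_le_pos => //; exact: pos_INR].
split=> // x y x_small d_pos y1.
have := vnorm_lincomb_sub_le y1 (grad_le x x_small d_pos).
by rewrite !Rmult_assoc.
Qed.

End JetDifference.

Lemma rpow_gt0E (d a : R) : 0 < d -> rpow d a = Rpower d a.
Proof. by rewrite /rpow; case: (Rlt_dec 0 d). Qed.

Lemma rpow_le0E (d a : R) : ~ 0 < d -> rpow d a = 0.
Proof. by rewrite /rpow; case: (Rlt_dec 0 d). Qed.

Section SphereComparison.
Variables (n p : nat) (c : R) (D N P phi : vec n -> R) (psi : vec n -> vec p -> R).
Hypotheses (c1 : 1 <= c) (D0 : forall x, 0 <= D x) (N0 : forall x, 0 <= N x).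
Hypothesis phi_le : forall x y, vnorm y = 1 -> phi x <= c * psi x y.
Hypothesis psi_le : forall x eps, 0 < eps -> exists y, vnorm y = 1 /\ psi x y <= c * phi x + eps.

Lemma gtrsim_iff_sphere :
  gtrsim (fun x => D x * phi x + N x) P <->
  gtrsim_sphere (fun x y => D x * psi x y + N x) (fun x _ => P x).
Proof.
split=> [[K [K0 [rho [rho0 PK]]]]|[K [K0 [rho [rho0 PK]]]]];
  exists (K * c); (split; first nra); exists rho; split=> // x.
  move=> y x_small y1; apply: Rle_trans (PK x x_small) _.
  rewrite Rmult_assoc; apply: Rmult_le_compat_l; first lra.
  have := phi_le x y1; have := D0 x; have := N0 x; move=> ? ? ?; nra.
move=> x_small; apply: le_epsilon => e e0.
have eps0 : 0 < e / (K * D x + 1) by apply: Rdiv_lt_0_compat; have := D0 x; nra.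
have [y [y1 psi_y]] := psi_le x eps0.
apply: Rle_trans (PK x y x_small y1) _.
set eps := e / (K * D x + 1) in eps0 psi_y *.
have KD0 : 0 <= K * D x by apply: Rmult_le_pos; [lra|exact: D0].
have KDe : K * D x * eps <= e.
  apply: (Rmult_le_reg_r (K * D x + 1)); first lra.
  have -> : K * D x * eps * (K * D x + 1) = K * D x * e by rewrite /eps; field; lra.
  nra.
have inner : D x * psi x y + N x <= c * (D x * phi x + N x) + D x * eps.
  have := Rmult_le_compat_l _ _ _ (D0 x) psi_y; have := N0 x; move=> ? ?; nra.
have := Rmult_le_compat_l _ _ _ (Rlt_le _ _ K0) inner; lra.
Qed.

End SphereComparison.

Lemma pow_succ_Rpower_split (d : R) (r : nat) (delta : R) : 0 < d ->
  d ^ (r + 1) = Rpower d (INR r + 1 - delta) * Rpower d delta.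
Proof.
move=> d0; rewrite -Rpower_plus -Rpower_pow // addn1 S_INR.
by congr Rpower; ring.
Qed.

(* An error term [C D^(r+1)] is absorbed: [D^(r+1) = D^(r+1-delta) D^delta] and
   [D^delta] is small near the origin. *)
Lemma gtrsim_sphere_perturb (n p r : nat) (D : vec n -> R) (U V : vec n -> vec p -> R)
    (delta C rho : R) :
  0 < delta -> 0 <= C -> 0 < rho -> (forall x, 0 <= D x <= vnorm x) ->
  (forall x y, 0 <= V x y) ->
  (forall x y, vnorm x <= rho -> 0 < D x -> vnorm y = 1 -> U x y <= V x y + C * D x ^ (r + 1)) ->
  gtrsim_sphere U (fun x _ => rpow (D x) (INR r + 1 - delta)) ->
  gtrsim_sphere V (fun x _ => rpow (D x) (INR r + 1 - delta)).
Proof.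
move=> delta0 C0 rho0 D_range V0 UV [K [K0 [rho' [rho'0 UK]]]].
set a := / (2 * K * C + 1); have a0 : 0 < a by apply: Rinv_0_lt_compat; nra.
have KCa : K * C * a <= / 2.
  apply: (Rmult_le_reg_r (2 * K * C + 1)); first nra.
  by rewrite Rmult_assoc Rinv_l; nra.
set t := Rpower a (/ delta); have t0 : 0 < t by apply: exp_pos.
have t_delta : Rpower t delta = a by rewrite /t Rpower_mult Rinv_l ?Rpower_1 //; lra.
exists (2 * K); split; first lra.
exists (Rmin rho' (Rmin rho t)); split; first by apply: Rmin_glb_lt => //; apply: Rmin_glb_lt.
move=> x y x_small y1.
have x_rho' : vnorm x <= rho' by apply: Rle_trans x_small (Rmin_l _ _).
have x_rho : vnorm x <= rho by apply: Rle_trans x_small (Rle_trans _ _ _ (Rmin_r _ _) (Rmin_l _ _)).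
have x_t : vnorm x <= t by apply: Rle_trans x_small (Rle_trans _ _ _ (Rmin_r _ _) (Rmin_r _ _)).
have [D0 Dx] := D_range x; have V0xy := V0 x y.
case: (Rlt_dec 0 (D x)) => [Dx0|Dx0]; last by rewrite rpow_le0E //; nra.
have := UK x y x_rho' y1; have := UV x y x_rho Dx0 y1; rewrite !rpow_gt0E //.
rewrite (pow_succ_Rpower_split r delta Dx0).
set P := Rpower (D x) (INR r + 1 - delta); have P0 : 0 < P by apply: exp_pos.
have Ddelta : Rpower (D x) delta <= a by rewrite -t_delta; apply: Rle_Rpower_l; lra.
have KCP : K * (C * (P * Rpower (D x) delta)) <= P / 2.
  have := Rmult_le_compat_l (K * C) _ _ (Rmult_le_pos _ _ (Rlt_le _ _ K0) C0) Ddelta.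
  move=> ?; nra.
move=> ? ?; nra.
Qed.

Section Conditions.
Variables (n p r : nat) (Sigma : vec n -> Prop).
Hypotheses (S0 : Sigma vzero) (p1 : (1 <= p)%N).

Let D := dist_set Sigma.
Let rhs (delta : R) (x : vec n) := rpow (D x) (INR r + 1 - delta).

Let D_range x : 0 <= D x <= vnorm x.
Proof. by split; [apply: dist_set_ge0; exists vzero|exact: dist_set_le_vnorm]. Qed.

Let sqrt_p_ge1 : 1 <= sqrt (INR p).
Proof. by rewrite -sqrt_1; apply: sqrt_le_1_alt; rewrite -/(INR 1); apply: le_INR; apply/leP. Qed.

Lemma kuo_iff_dstar (f g : vec n -> vec p) (delta : R) :
  gtrsim (fun x => D x * kuo_df f x + vnorm (g x)) (rhs delta) <->
  gtrsim_sphere (fun x y => D x * vnorm (dstar f x y) + vnorm (g x)) (fun x _ => rhs delta x).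
Proof.
apply: (gtrsim_iff_sphere _ sqrt_p_ge1) => [x|x|x y y1|x eps eps0]; first exact: (D_range x).1.
- exact: vnorm_ge0.
- exact: kuo_le_lincomb.
have kuo0 : 0 <= kuo_df f x := kuo_ge0 _ p1.
have [y [y1 fy]] : exists y, vnorm y = 1 /\ vnorm (dstar f x y) < kuo_df f x + eps.
  by apply: kuo_lt_lincomb => //; change (kuo_df f x < kuo_df f x + eps); lra.
by exists y; split=> //; apply: Rlt_le; apply: Rlt_le_trans fy _; nra.
Qed.

Lemma gram_quot_iff_dstar (g : vec n -> vec p) (delta : R) :
  gtrsim (fun x => D x * sqrt (gram_quot g x) + vnorm (g x)) (rhs delta) <->
  gtrsim_sphere (fun x y => D x * vnorm (dstar g x y) + vnorm (g x)) (fun x _ => rhs delta x).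
Proof.
apply: (gtrsim_iff_sphere _ sqrt_p_ge1) => [x|x|x y y1|x eps eps0]; first exact: (D_range x).1.
- exact: vnorm_ge0.
- have := sqrt_gram_quot_le_dstar g x y1; have := vnorm_ge0 (dstar g x y) => ? ?; nra.
have [y [y1 gy]] := exists_dstar_le_sqrt_gram_quot g x p1.
by exists y; split=> //; lra.
Qed.

Lemma dstar_jet_iff (f g : vec n -> vec p) (delta : R) :
  Egerm (r + 1) f -> Egerm (r + 1) g -> jet_eq Sigma r f g -> 0 < delta ->
  gtrsim_sphere (fun x y => D x * vnorm (dstar g x y) + vnorm (g x)) (fun x _ => rhs delta x) <->
  gtrsim_sphere (fun x y => D x * vnorm (dstar f x y) + vnorm (g x)) (fun x _ => rhs delta x).
Proof.
move=> f_germ g_germ fg_jet delta0.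
have [C [rho [C0 [rho0 fg_le]]]] := dstar_sub_le S0 f_germ g_germ fg_jet.
have V0 (h : vec n -> vec p) x y : 0 <= D x * vnorm (dstar h x y) + vnorm (g x).
  by have := (D_range x).1; have := vnorm_ge0 (dstar h x y); have := vnorm_ge0 (g x) => ? ? ?; nra.
have err (h h' : vec n -> vec p) x y : vnorm (vsub (dstar h x y) (dstar h' x y)) <= C * D x ^ r ->
    D x * vnorm (dstar h x y) + vnorm (g x) <=
    D x * vnorm (dstar h' x y) + vnorm (g x) + C * D x ^ (r + 1).
  move=> hh'; have := vnorm_le_vsub (dstar h x y) (dstar h' x y); have := (D_range x).1.
  by rewrite addn1 /=; move=> ? ?; nra.
split; apply: (gtrsim_sphere_perturb delta0 C0 rho0 D_range (V0 _)) => x y x_small Dx y1;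
  apply: err.
  exact: fg_le.
by rewrite vnorm_vsubC; apply: fg_le.
Qed.

End Conditions.

Theorem proposition2p14 (n p r : nat) (Sigma : vec n -> Prop)
  (f : vec n -> vec p) :
  closed_vset Sigma -> Sigma (@vzero n) ->
  (1 <= r)%N -> (1 <= p)%N -> (p <= n)%N ->
  Egerm (r + 1) f ->
  let c1 := forall g, Egerm (r + 1) g -> jet_eq Sigma r f g ->
      exists delta, 0 < delta /\
        gtrsim (fun x => dist_set Sigma x * kuo_df f x + vnorm (g x))
               (fun x => rpow (dist_set Sigma x) (INR r + 1 - delta)) in
  let c2 := forall g, Egerm (r + 1) g -> jet_eq Sigma r f g ->
      exists delta, 0 < delta /\
        gtrsim (fun x => dist_set Sigma x * sqrt (gram_quot g x) + vnorm (g x))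
               (fun x => rpow (dist_set Sigma x) (INR r + 1 - delta)) in
  let c3 := forall g, Egerm (r + 1) g -> jet_eq Sigma r f g ->
      exists delta, 0 < delta /\
        gtrsim_sphere
          (fun x y => dist_set Sigma x * vnorm (dstar g x y) + vnorm (g x))
          (fun x _ => rpow (dist_set Sigma x) (INR r + 1 - delta)) in
  let c4 := forall g, Egerm (r + 1) g -> jet_eq Sigma r f g ->
      exists delta, 0 < delta /\
        gtrsim_sphere
          (fun x y => dist_set Sigma x * vnorm (dstar f x y) + vnorm (g x))
          (fun x _ => rpow (dist_set Sigma x) (INR r + 1 - delta)) in
  (c1 <-> c2) /\ (c1 <-> c3) /\ (c1 <-> c4).
Proof.
move=> _ S0 _ p1 _ f_germ c1 c2 c3 c4.
have c14 : c1 <-> c4.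
  by split=> c g g_germ fg_jet; have [delta [delta0 h]] := c g g_germ fg_jet;
    exists delta; split=> //; apply/(kuo_iff_dstar r S0 p1).
have c23 : c2 <-> c3.
  by split=> c g g_germ fg_jet; have [delta [delta0 h]] := c g g_germ fg_jet;
    exists delta; split=> //; apply/(gram_quot_iff_dstar r S0 p1).
have c34 : c3 <-> c4.
  by split=> c g g_germ fg_jet; have [delta [delta0 h]] := c g g_germ fg_jet;
    exists delta; split=> //; apply/(dstar_jet_iff S0 f_germ g_germ fg_jet delta0).
tauto.
Qed.
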